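(* Let $d\ge 2$, let $\bm{k}_1,\ldots,\bm{k}_d\in\mathbb{R}^d$ be a basis of $\mathbb{R}^d$ with $\mathsf{K}=[\bm{k}_1,\ldots,\bm{k}_d]$, and let $\mathfrak{a},\mathfrak{b}\in\mathbb{R}$. For $\bm{u}=[\alpha_1,\ldots,\alpha_d,\beta_1,\ldots,\beta_d]^T\in\mathbb{C}^{2d}$ and $\bm{x}\in\mathbb{R}^d$ let $p(\bm{x};\bm{u})=\sum_{j=1}^d\alpha_j e^{i\bm{k}_j\cdot\bm{x}}+\beta_j e^{-i\bm{k}_j\cdot\bm{x}}$, $\psi(\bm{x};\bm{u})=\mathfrak{a}|p(\bm{x};\bm{u})|^2-\mathfrak{b}|\nabla_{\bm{x}}p(\bm{x};\bm{u})|^2$, and let $\mathsf{Q}(\bm{0})$ be the Hermitian matrix with $\psi(\bm{0};\bm{u})=\bm{u}^*\mathsf{Q}(\bm{0})\bm{u}$. Fix a sign $\pm$ (with $\mp$ denoting the opposite sign), and let $\bm{u}=[\bm{v};\pm\bm{v}]$, $\bm{v}\in\mathbb{R}^d$, be a real unit-norm eigenvector of $\mathsf{Q}(\bm{0})$ with eigenvalue $\lambda$. Let $R^\pm_{\lambda,\bm{u}}$ be the set of pairs $(\bm{s},\bm{r})\in\{0,1\}^d\times\{0,1\}^d$ such that the three vectors $$[(-1)^{\bm{s}}\odot\bm{v};\mp(-1)^{\bm{s}}\odot\bm{v}],\quad [(-1)^{\bm{r}}\odot\bm{v};\mp(-1)^{\bm{r}}\odot\bm{v}],\quad [(-1)^{\bm{s}+\bm{r}}\odot\bm{v};\pm(-1)^{\bm{s}+\bm{r}}\odot\bm{v}]$$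 all lie in the $\lambda$-eigenspace of $\mathsf{Q}(\bm{0})$. Then for every $\bm{n}\in\mathbb{Z}^d$ and every $(\bm{s},\bm{r})\in R^\pm_{\lambda,\bm{u}}$, the set $L_{\lambda,\bm{u}}=\{\bm{x}\in\mathbb{R}^d:\psi(\bm{x};\bm{u})=\lambda\}$ contains $$\{\mathsf{K}^{-T}(\theta(-1)^{\bm{s}}+\phi(-1)^{\bm{r}}+2\pi\bm{n}):\theta,\phi\in\mathbb{R}\}.$$ Moreover, this set is a plane whenever $(-1)^{\bm{s}}$ and $(-1)^{\bm{r}}$ are linearly independent, equivalently whenever $(-1)^{\bm{s}+\bm{r}}\notin\{-\bm{1},\bm{1}\}$.
   Context: $[\bm{x};\bm{y}]$ denotes the vertical stacking of vectors $\bm{x},\bm{y}$. For $\bm{s}\in\{0,1\}^d$ (or $\bm{s}\in\{0,1,2\}^d$ for sums), $(-1)^{\bm{s}}=[(-1)^{s_1},\ldots,(-1)^{s_d}]$; $\bm{1}$ is the all-ones vector in $\mathbb{R}^d$; and $\odot$ is the componentwise (Hadamard) product. *)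

From HB Require Import structures.
From mathcomp Require Import all_boot all_order all_algebra.
From mathcomp Require Import all_classical all_reals all_analysis.
From mathcomp Require Import complex.
Set Implicit Arguments. Unset Strict Implicit. Unset Printing Implicit Defensive.
Import Order.TTheory GRing.Theory Num.Theory.
Local Open Scope ring_scope.
Local Open Scope complex_scope.
Local Open Scope classical_set_scope.

Section Defs.
Variables (R : realType) (d : nat).

Definition cexpi (t : R) : R[i] := (cos t) +i* (sin t).

Definition kdot (K : 'M[R]_d) (j : 'I_d) (x : 'cV[R]_d) : R :=
  \sum_(m < d) K m j * x m 0.

Definition pfun (K : 'M[R]_d) (u : 'cV[R[i]]_(d + d)) (x : 'cV[R]_d) : R[i] :=
  \sum_(j < d) (u (lshift d j) 0 * cexpi (kdot K j x)
              + u (rshift d j) 0 * cexpi (- kdot K j x)).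

Definition normsqC (z : R[i]) : R := (complex.Re z) ^+ 2 + (complex.Im z) ^+ 2.

Definition partial (f : 'cV[R]_d -> R) (m : 'I_d) (x : 'cV[R]_d) : R :=
  derive1 (fun t : R => f (x + t *: delta_mx m 0)) 0.

Definition gradsq (K : 'M[R]_d) (u : 'cV[R[i]]_(d + d)) (x : 'cV[R]_d) : R :=
  \sum_(m < d) ((partial (fun y => complex.Re (pfun K u y)) m x) ^+ 2
              + (partial (fun y => complex.Im (pfun K u y)) m x) ^+ 2).

Definition psi (a b : R) (K : 'M[R]_d) (u : 'cV[R[i]]_(d + d)) (x : 'cV[R]_d) : R :=
  a * normsqC (pfun K u x) - b * gradsq K u x.

Definition hermitian_mx n (Q : 'M[R[i]]_n) : Prop :=
  forall i j, Q j i = (Q i j)^*.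

Definition qform n (Q : 'M[R[i]]_n) (u : 'cV[R[i]]_n) : R[i] :=
  \sum_(i < n) \sum_(j < n) (u i 0)^* * Q i j * u j 0.

Definition cvec n (w : 'cV[R]_n) : 'cV[R[i]]_n := map_mx (fun x : R => x%:C) w.

Definition sgnv (s : 'I_d -> bool) : 'cV[R]_d := \col_j ((-1) ^+ s j).
Definition sgnv2 (s r : 'I_d -> bool) : 'cV[R]_d :=
  \col_j ((-1) ^+ (s j + r j)%N).

Definition hadamard (x y : 'cV[R]_d) : 'cV[R]_d := \col_j (x j 0 * y j 0).

Definition in_eigenspace n (Q : 'M[R[i]]_n) (lam : R) (w : 'cV[R[i]]_n) : Prop :=
  Q *m w = lam%:C *: w.

Definition lin_indep2 (x y : 'cV[R]_d) : Prop :=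
  forall c1 c2 : R, c1 *: x + c2 *: y = 0 -> c1 = 0 /\ c2 = 0.

Definition is_plane (S : set 'cV[R]_d) : Prop :=
  exists (x0 y1 y2 : 'cV[R]_d), lin_indep2 y1 y2 /\
    S = [set x | exists th ph : R, x = x0 + th *: y1 + ph *: y2].

Definition lineset (K : 'M[R]_d) (s r : 'I_d -> bool) (n : 'cV[int]_d) : set 'cV[R]_d :=
  [set x | exists th ph : R,
     x = (invmx K)^T *m (th *: sgnv s + ph *: sgnv r
                          + (2 * pi) *: map_mx (fun z : int => z%:~R) n)].

Definition levelset (a b : R) (K : 'M[R]_d) (u : 'cV[R[i]]_(d + d)) (lam : R)
  : set 'cV[R]_d := [set x | psi a b K u x = lam].

End Defs.
Arguments sgnv R {d} s.
Arguments sgnv2 R {d} s r.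

From HB Require Import structures.
From mathcomp Require Import all_boot all_order all_algebra.
From mathcomp Require Import all_classical all_reals all_analysis.
From mathcomp Require Import complex.
From mathcomp Require Import ring lra.
Import Order.TTheory GRing.Theory Num.Theory.
Local Open Scope ring_scope.
Local Open Scope complex_scope.
Local Open Scope classical_set_scope.

(* Translating by x multiplies the coefficients of u by the unimodular factors
   e^{+-i k_j.x}, so psi(x; u) = psi(0; u_x) for a modulated vector u_x of the
   same norm.  On the given set, k_j.x = theta (-1)^{s_j} + phi (-1)^{r_j}
   modulo 2 pi, and since e^{i t sigma} = cos t + i sigma sin t for sigma = +-1,
   expanding the product of the two factors writes u_x as
   cos theta cos phi u - sin theta sin phi u_{s+r}
     + i sin theta cos phi u_s + i cos theta sin phi u_r,
   a combination of vectors of the lambda-eigenspace.  Hence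
   psi(x; u) = u_x^* Q u_x = lambda |u_x|^2 = lambda.  The set is a plane as the
   image of span((-1)^s, (-1)^r) under the injective K^{-T}, and two sign
   vectors are dependent exactly when they are proportional, i.e. when their
   componentwise product is constant. *)

Lemma periodicz (U V : zmodType) (f : U -> V) (T : U) :
  periodic f T -> forall (z : int) (a : U), f (a + T *~ z) = f a.
Proof.
move=> fT [k|k] a; first exact: periodicn.
by rewrite NegzE mulrNz -[in RHS](subrK (T *+ k.+1) a) periodicn.
Qed.

Section ComplexExponential.
Variable R : realType.
Implicit Types t u : R.

Lemma cexpiD t u : cexpi (t + u) = cexpi t * cexpi u.
Proof. by rewrite /cexpi cosD sinD; simpc; congr (_ +i* _); ring. Qed.

Lemma cexpiN t : cexpi (- t) = (cexpi t)^*.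
Proof. by rewrite /cexpi cosN sinN. Qed.

Lemma conjC_cexpiM t : (cexpi t)^* * cexpi t = 1.
Proof.
rewrite /cexpi; simpc; apply/eqP; rewrite eq_complex /= cos2Dsin2.
by apply/andP; split; apply/eqP; ring.
Qed.

Lemma cexpi_sign t (b : bool) : cexpi (t * (-1) ^+ b) = cos t +i* ((-1) ^+ b * sin t).
Proof. by case: b; rewrite /cexpi ?expr0 ?expr1 ?mulr1 ?mul1r ?mulrN1 ?mulN1r ?cosN ?sinN. Qed.

Lemma cexpi_2piz t (z : int) : cexpi (t + 2 * pi * z%:~R) = cexpi t.
Proof.
by rewrite /cexpi mulrzr mulr_natl !periodicz //; [apply: sinD2pi | apply: cosD2pi].
Qed.

End ComplexExponential.

Section QuadraticForms.
Context {R : realType}.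

Definition sqnormc {n} (u : 'cV[R[i]]_n) : R[i] := \sum_i (u i 0)^* * u i 0.

Lemma qform_eigen {n} {Q : 'M[R[i]]_n} {lam : R} {w : 'cV[R[i]]_n} :
  in_eigenspace Q lam w -> qform Q w = lam%:C * sqnormc w.
Proof.
move=> /matrixP Qw; rewrite /qform /sqnormc mulr_sumr; apply: eq_bigr => i _.
have := Qw i 0; rewrite !mxE mulrCA => <-.
by rewrite mulr_sumr; apply: eq_bigr => j _; rewrite mulrA.
Qed.

Lemma in_eigenspaceD {n} (Q : 'M[R[i]]_n) lam w1 w2 :
  in_eigenspace Q lam w1 -> in_eigenspace Q lam w2 -> in_eigenspace Q lam (w1 + w2).
Proof. by rewrite /in_eigenspace mulmxDr scalerDr => -> ->. Qed.

Lemma in_eigenspaceZ {n} (Q : 'M[R[i]]_n) lam z w :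
  in_eigenspace Q lam w -> in_eigenspace Q lam (z *: w).
Proof. by rewrite /in_eigenspace -scalemxAr => ->; rewrite !scalerA mulrC. Qed.

End QuadraticForms.

Section Modulation.
Context {R : realType} {d : nat} (K : 'M[R]_d).
Implicit Types (x y : 'cV[R]_d) (u : 'cV[R[i]]_(d + d)).

Lemma kdotD j x y : kdot K j (x + y) = kdot K j x + kdot K j y.
Proof. by rewrite /kdot -big_split; apply: eq_bigr => m _; rewrite mxE mulrDr. Qed.

Lemma kdot_trmx j x : kdot K j x = (K^T *m x) j 0.
Proof. by rewrite /kdot !mxE; apply: eq_bigr => m _; rewrite mxE. Qed.

Definition modulate x u : 'cV[R[i]]_(d + d) :=
  col_mx (\col_j (u (lshift d j) 0 * cexpi (kdot K j x)))
         (\col_j (u (rshift d j) 0 * cexpi (- kdot K j x))).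

Lemma modulate_lshift x u j :
  modulate x u (lshift d j) 0 = u (lshift d j) 0 * cexpi (kdot K j x).
Proof. by rewrite col_mxEu mxE. Qed.

Lemma modulate_rshift x u j :
  modulate x u (rshift d j) 0 = u (rshift d j) 0 * cexpi (- kdot K j x).
Proof. by rewrite col_mxEd mxE. Qed.

Lemma pfun_modulate x y u : pfun K u (x + y) = pfun K (modulate x u) y.
Proof.
apply: eq_bigr => j _.
by rewrite modulate_lshift modulate_rshift kdotD opprD !cexpiD !mulrA.
Qed.

Lemma psi_modulate a b x u : psi a b K u x = psi a b K (modulate x u) 0.
Proof.
rewrite /psi /gradsq -pfun_modulate addr0.
congr (_ - _ * _); apply: eq_bigr => m _; rewrite /partial.
by congr (_ ^+ 2 + _ ^+ 2); congr (derive1 _ 0); apply: funext => t /=;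
  rewrite pfun_modulate add0r.
Qed.

Lemma sqnormc_modulate x u : sqnormc (modulate x u) = sqnormc u.
Proof.
have unimod z t : (z * cexpi t)^* * (z * cexpi t) = z^* * z.
  by rewrite rmorphM mulrACA conjC_cexpiM mulr1.
rewrite /sqnormc !big_split_ord; congr (_ + _); apply: eq_bigr => j _.
  by rewrite modulate_lshift unimod.
by rewrite modulate_rshift unimod.
Qed.

Lemma psi_eigen_modulate {a b : R} {Q : 'M[R[i]]_(d + d)} {lam : R} {x u} :
  (forall w, (psi a b K w 0)%:C = qform Q w) ->
  in_eigenspace Q lam (modulate x u) -> sqnormc u = 1 -> psi a b K u x = lam.
Proof.
move=> hQ eig u1; apply: (@complexI R).
by rewrite psi_modulate hQ (qform_eigen eig) sqnormc_modulate u1 mulr1.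
Qed.

End Modulation.

Section SignPatterns.
Context {R : realType} {d : nat}.
Implicit Types (s r : 'I_d -> bool) (v : 'cV[R]_d).

Definition pairvec v (c : R) : 'cV[R[i]]_(d + d) := cvec (col_mx v (c *: v)).

Lemma sqnormc_pairvec v c :
  sqnormc (pairvec v c) = (\sum_j v j 0 ^+ 2 + \sum_j (c * v j 0) ^+ 2)%:C.
Proof.
rewrite /sqnormc big_split_ord rmorphD !rmorph_sum /=.
congr (_ + _); apply: eq_bigr => j _.
  by rewrite mxE col_mxEu; simpc; rewrite expr2.
by rewrite mxE col_mxEd mxE; simpc; rewrite expr2.
Qed.

Lemma modulate_sign_pattern (K : 'M[R]_d) v (c th ph : R) s r (n : 'cV[int]_d) x :
  K^T *m x = th *: sgnv R s + ph *: sgnv R r + (2 * pi) *: map_mx intr n ->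
  modulate K x (pairvec v c) =
      (cos th * cos ph)%:C *: pairvec v c
    - (sin th * sin ph)%:C *: pairvec (hadamard (sgnv2 R s r) v) c
    + (0 +i* (sin th * cos ph)) *: pairvec (hadamard (sgnv R s) v) (- c)
    + (0 +i* (cos th * sin ph)) *: pairvec (hadamard (sgnv R r) v) (- c).
Proof.
move=> Kx.
have kx j : kdot K j x = th * (-1) ^+ s j + ph * (-1) ^+ r j + 2 * pi * (n j 0)%:~R.
  by rewrite kdot_trmx Kx !mxE.
rewrite /modulate /pairvec /cvec !map_col_mx !scale_col_mx opp_col_mx !add_col_mx.
congr col_mx; apply/colP => j; rewrite mxE ?col_mxEu ?col_mxEd !mxE ?cexpiN kx.
all: rewrite cexpi_2piz cexpiD !cexpi_sign exprD; simpc.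
all: by congr (_ +i* _); ring.
Qed.

Lemma lineset_sub_levelset a b (K : 'M[R]_d) (Q : 'M[R[i]]_(d + d)) lam v c s r n :
  K \in unitmx -> (forall w, (psi a b K w 0)%:C = qform Q w) ->
  \sum_j v j 0 ^+ 2 + \sum_j (c * v j 0) ^+ 2 = 1 ->
  in_eigenspace Q lam (pairvec v c) ->
  in_eigenspace Q lam (pairvec (hadamard (sgnv R s) v) (- c)) ->
  in_eigenspace Q lam (pairvec (hadamard (sgnv R r) v) (- c)) ->
  in_eigenspace Q lam (pairvec (hadamard (sgnv2 R s r) v) c) ->
  lineset K s r n `<=` levelset a b K (pairvec v c) lam.
Proof.
move=> Kunit hQ unit e0 es er esr _ [th [ph ->]].
apply: (psi_eigen_modulate _ hQ); last by rewrite sqnormc_pairvec unit.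
rewrite (modulate_sign_pattern _ _ _ th ph s r n); last first.
  by rewrite mulmxA -trmx_mul mulVmx // trmx1 mul1mx.
by rewrite -scaleNr; do !apply: in_eigenspaceD; apply: in_eigenspaceZ.
Qed.

End SignPatterns.

Section SignVectors.
Context {R : realType} {d : nat}.
Implicit Types (s r : 'I_d -> bool).

Lemma sign_comb_eq0 (c1 c2 : R) (b1 b2 : bool) :
  (c1 * (-1) ^+ b1 + c2 * (-1) ^+ b2 == 0) = (c1 + c2 * ((-1) ^+ b1 * (-1) ^+ b2) == 0).
Proof.
have -> : c1 * (-1) ^+ b1 + c2 * (-1) ^+ b2
        = (-1) ^+ b1 * (c1 + c2 * ((-1) ^+ b1 * (-1) ^+ b2)).
  rewrite mulrDr mulrC; congr (_ + _).
  by rewrite mulrCA [(-1) ^+ b1 * (_ * _)]mulrA -expr2 sqrr_sign mul1r.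
by rewrite mulf_eq0 signr_eq0.
Qed.

Lemma sgnv_comb_eq0 s r (c1 c2 : R) :
  c1 *: sgnv R s + c2 *: sgnv R r = 0 <-> forall j, c1 + c2 * sgnv2 R s r j 0 = 0.
Proof.
split => [/matrixP comb j | comb].
  by apply/eqP; have := comb j 0; rewrite !mxE exprD -sign_comb_eq0 => ->.
apply/matrixP => j k; rewrite [k]ord1 !mxE; apply/eqP.
by rewrite sign_comb_eq0 -exprD; move: (comb j); rewrite mxE => ->.
Qed.

Lemma sgnv2_sign s r j : sgnv2 R s r j 0 = 1 \/ sgnv2 R s r j 0 = -1.
Proof. by rewrite mxE -signr_odd; case: odd; [right | left]. Qed.

Lemma lin_indep2_sgnvP s r :
  lin_indep2 (sgnv R s) (sgnv R r) <->
  ~ (sgnv2 R s r = const_mx 1 \/ sgnv2 R s r = const_mx (-1)).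
Proof.
split=> [indep [t1 | tN1] | nconst c1 c2 /sgnv_comb_eq0 comb].
- have [] := indep 1 (-1); last by move=> /eqP; rewrite oner_eq0.
  by apply/sgnv_comb_eq0 => j; rewrite t1 mxE mulr1 subrr.
- have [] := indep 1 1; last by move=> /eqP; rewrite oner_eq0.
  by apply/sgnv_comb_eq0 => j; rewrite tN1 mxE mulrN1 subrr.
have [[j tj] | no1] := pselect (exists j, sgnv2 R s r j 0 = 1); last first.
  case: nconst; right; apply/matrixP => j k; rewrite [k]ord1 [in RHS]mxE.
  by case: (sgnv2_sign s r j) => // tj; exfalso; apply: no1; exists j.
have [[k tk] | noN1] := pselect (exists k, sgnv2 R s r k 0 = -1); last first.
  case: nconst; left; apply/matrixP => k l; rewrite [l]ord1 [in RHS]mxE.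
  by case: (sgnv2_sign s r k) => // tk; exfalso; apply: noN1; exists k.
by have := comb j; have := comb k; rewrite tj tk; lra.
Qed.

Lemma lin_indep2_mulmx (A M : 'M[R]_d) (y1 y2 : 'cV[R]_d) :
  A *m M = 1%:M -> lin_indep2 y1 y2 -> lin_indep2 (M *m y1) (M *m y2).
Proof.
move=> AM indep c1 c2 /(congr1 (mulmx A)).
by rewrite mulmx0 mulmxDr -!scalemxAr !mulmxA AM !mul1mx; apply: indep.
Qed.

Lemma is_plane_lineset (K : 'M[R]_d) s r n :
  K \in unitmx -> lin_indep2 (sgnv R s) (sgnv R r) -> is_plane (lineset K s r n).
Proof.
move=> Kunit indep; set M := (invmx K)^T.
exists (M *m ((2 * pi) *: map_mx intr n)), (M *m sgnv R s), (M *m sgnv R r); split.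
  by apply: (lin_indep2_mulmx K^T) indep; rewrite -trmx_mul mulVmx // trmx1.
apply/seteqP; split => y [th [ph ->]]; exists th, ph; rewrite !mulmxDr -!scalemxAr.
  by rewrite addrC addrA.
by rewrite -addrA addrC.
Qed.

End SignVectors.

Theorem lemma2p9 (R : realType) (d : nat) (hd : (2 <= d)%N)
  (K : 'M[R]_d) (hK : K \in unitmx) (a b : R)
  (Q : 'M[R[i]]_(d + d)) (hQh : hermitian_mx Q)
  (hQ : forall u : 'cV[R[i]]_(d + d), (psi a b K u 0)%:C = qform Q u)
  (eps : bool) (v : 'cV[R]_d) (lam : R)
  (hunit : \sum_(j < d) v j 0 ^+ 2 + \sum_(j < d) ((-1) ^+ eps * v j 0) ^+ 2 = 1)
  (heig : in_eigenspace Q lam (cvec (col_mx v ((-1) ^+ eps *: v)))) :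
  forall (n : 'cV[int]_d) (s r : 'I_d -> bool),
    in_eigenspace Q lam
      (cvec (col_mx (hadamard (sgnv R s) v) (- (-1) ^+ eps *: hadamard (sgnv R s) v))) ->
    in_eigenspace Q lam
      (cvec (col_mx (hadamard (sgnv R r) v) (- (-1) ^+ eps *: hadamard (sgnv R r) v))) ->
    in_eigenspace Q lam
      (cvec (col_mx (hadamard (sgnv2 R s r) v) ((-1) ^+ eps *: hadamard (sgnv2 R s r) v))) ->
    lineset K s r n `<=` levelset a b K (cvec (col_mx v ((-1) ^+ eps *: v))) lam
    /\ (lin_indep2 (sgnv R s) (sgnv R r) -> is_plane (lineset K s r n))
    /\ (lin_indep2 (sgnv R s) (sgnv R r) <->
        ~ (sgnv2 R s r = const_mx 1 \/ sgnv2 R s r = const_mx (-1))).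
Proof.
move=> n s r es er esr; split; [|split].
- exact: lineset_sub_levelset.
- exact: is_plane_lineset.
- exact: lin_indep2_sgnvP.
Qed.
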